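(* For $d\ge3$ and each $s\in\{0,1,2\}$, the maximal number of pairwise disjoint lines in the family $\mathcal{L}^s$ is $\mathfrak{s}(\mathcal{L}^s)=d$. In particular, the maximal number $\mathfrak{s}({\rm F}_d)$ of pairwise disjoint lines on ${\rm F}_d$ satisfies $\mathfrak{s}({\rm F}_d)\le 3d$.
   Context: ${\rm F}_d\subset\mathbb{P}^3(\mathbb{C})$ is the surface $x^d-y^d-z^d+w^d=0$. Fix a primitive $d$-th root of unity $\eta$ and $v\in\mathbb{C}$ with $v^d=-1$. For $k,i\in\{0,\dots,d-1\}$ define $L^0_{k,i}:\{y=\eta^i x,\ w=\eta^k z\}$, $L^1_{k,i}:\{x=\eta^{k+i}z,\ y=\eta^i w\}$, $L^2_{k,i}:\{x=v\eta^i w,\ y=v\eta^{k+i}z\}$, and $\mathcal{L}^s=\{L^s_{k,i}\}_{k,i}$. The lines on ${\rm F}_d$ are exactly the elements of $\mathcal{L}^0\cup\mathcal{L}^1\cup\mathcal{L}^2$. For a set $X$ of lines (or a surface), $\mathfrak{s}(X)$ denotes the maximal number of pairwise disjoint lines in $X$. *)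

From HB Require Import structures.
From mathcomp Require Import all_boot all_order all_algebra all_field.
From mathcomp Require Import boolp.
Set Implicit Arguments. Unset Strict Implicit. Unset Printing Implicit Defensive.
Import GRing.Theory Num.Theory.
Local Open Scope ring_scope.

(* A line of P^3(C), given as the set of homogeneous coordinate vectors
   (x,y,z,w) in C^4 satisfying its defining linear equations. *)
Definition line := algC -> algC -> algC -> algC -> Prop.

(* Two lines of P^3 are disjoint iff the only common solution of their
   equations is the zero vector (i.e. no common projective point). *)
Definition disjoint_lines (L M : line) : Prop :=
  forall x y z w, L x y z w -> M x y z w ->
    x = 0 /\ y = 0 /\ z = 0 /\ w = 0.

(* The lines L^s_{k,i} on the Fermat surface x^d - y^d - z^d + w^d = 0,
   with eta a primitive d-th root of unity and v^d = -1. *)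
Definition Lsk (eta v : algC) (s : 'I_3) (k i : nat) : line :=
  fun x y z w =>
  match val s with
  | 0%N => y = eta ^+ i * x /\ w = eta ^+ k * z
  | 1%N => x = eta ^+ (k + i) * z /\ y = eta ^+ i * w
  | _ => x = v * eta ^+ i * w /\ y = v * eta ^+ (k + i) * z
  end.

Definition Lfam (d : nat) (eta v : algC) (s : 'I_3) : 'I_d * 'I_d -> line :=
  fun p => Lsk eta v s p.1 p.2.

Definition Lall (d : nat) (eta v : algC) : 'I_3 * ('I_d * 'I_d) -> line :=
  fun p => Lsk eta v p.1 p.2.1 p.2.2.

Definition pairwise_disjoint (I : finType) (F : I -> line) (S : {set I}) : Prop :=
  forall a b, a \in S -> b \in S -> a != b -> disjoint_lines (F a) (F b).

Definition frak_s (I : finType) (F : I -> line) : nat :=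
  \max_(S : {set I} | `[< pairwise_disjoint F S >]) #|S|.

Arguments Lfam : clear implicits.
Arguments Lall : clear implicits.

From HB Require Import structures.
From mathcomp Require Import all_boot all_order all_algebra all_field.
From mathcomp Require Import boolp.
Import GRing.Theory Num.Theory.
Local Open Scope ring_scope.

(* For fixed s and i, the d lines L^s_{k,i} (k = 0..d-1) all pass through one
   point that does not depend on k, so a disjoint subfamily of L^s contains at
   most one line for each i, and one of all lines at most one for each (s, i).
   Conversely, since the eta^i are pairwise distinct, the d lines
   L^0_{i,i} (resp. L^s_{0,i} for s = 1, 2) are pairwise disjoint. *)

Lemma frak_s_le_card {I J : finType} {F : I -> line} (g : I -> J) :
  (forall a b, g a = g b -> a != b -> ~ disjoint_lines (F a) (F b)) ->
  (frak_s F <= #|J|)%N.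
Proof.
move=> meet_fibre; apply/bigmax_leqP => S /asboolP disjS.
rewrite -(card_in_imset (f := g)) ?max_card // => a b aS bS gab.
apply/eqP/negPn/negP => neq_ab.
exact: meet_fibre a b gab neq_ab (disjS a b aS bS neq_ab).
Qed.

Lemma pairwise_disjoint_le_frak_s (I : finType) (F : I -> line) (S : {set I}) :
  pairwise_disjoint F S -> (#|S| <= frak_s F)%N.
Proof.
by move=> disjS; apply: (leq_bigmax_cond (F := fun S : {set I} => #|S|)); apply/asboolP.
Qed.

Lemma mul_neq_eq0 {R : idomainType} {a b t : R} : a != b -> a * t = b * t -> t = 0.
Proof.
move=> neq_ab /eqP; rewrite -subr_eq0 -mulrBl mulf_eq0 subr_eq0 (negbTE neq_ab).
by move/eqP.
Qed.

Section FermatLines.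

Variables (eta v : algC).

Lemma Lsk_common_point (s : 'I_3) (i : nat) :
  exists x y z w, ~ (x = 0 /\ y = 0 /\ z = 0 /\ w = 0) /\
    forall k, Lsk eta v s k i x y z w.
Proof.
have one_neq0 (P : Prop) : ~ (P /\ (1 : algC) = 0) by case=> _ /eqP; rewrite oner_eq0.
case: s => [[|[|[|s]]] lt_s3] //.
- exists 1, (eta ^+ i), 0, 0; split; first by case=> /eqP; rewrite oner_eq0.
  by move=> k; rewrite /Lsk /= mulr1 mulr0.
- exists 0, (eta ^+ i), 0, 1; split; first by case=> _ [_ /one_neq0].
  by move=> k; rewrite /Lsk /= mulr1 mulr0.
- exists (v * eta ^+ i), 0, 0, 1; split; first by case=> _ [_ /one_neq0].
  by move=> k; rewrite /Lsk /= mulr1 mulr0.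
Qed.

Lemma Lsk_meet (s : 'I_3) (k k' i : nat) :
  ~ disjoint_lines (Lsk eta v s k i) (Lsk eta v s k' i).
Proof.
move=> disj; have [x [y [z [w [nz0 on_line]]]]] := Lsk_common_point s i.
exact: nz0 (disj _ _ _ _ (on_line k) (on_line k')).
Qed.

Definition diag_k (s : 'I_3) (i : nat) : nat := if val s == 0%N then i else 0%N.

Lemma Lsk_diag_disjoint (s : 'I_3) (i j : nat) :
  v != 0 -> eta ^+ i != eta ^+ j ->
  disjoint_lines (Lsk eta v s (diag_k s i) i) (Lsk eta v s (diag_k s j) j).
Proof.
move=> v_neq0 neq_ij x y z w; rewrite /diag_k /Lsk.
case: s => [[|[|[|s]]] lt_s3] //=; rewrite ?add0n.
- move=> [-> ->] [y2 w2].
  have -> : x = 0 by apply: (mul_neq_eq0 neq_ij); rewrite -y2.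
  have -> : z = 0 by apply: (mul_neq_eq0 neq_ij); rewrite -w2.
  by rewrite !mulr0.
- move=> [-> ->] [x2 y2].
  have -> : z = 0 by apply: (mul_neq_eq0 neq_ij); rewrite -x2.
  have -> : w = 0 by apply: (mul_neq_eq0 neq_ij); rewrite -y2.
  by rewrite !mulr0.
- have neq_vij : v * eta ^+ i != v * eta ^+ j by rewrite (inj_eq (mulfI v_neq0)).
  move=> [-> ->] [x2 y2].
  have -> : w = 0 by apply: (mul_neq_eq0 neq_vij); rewrite -x2.
  have -> : z = 0 by apply: (mul_neq_eq0 neq_vij); rewrite -y2.
  by rewrite !mulr0.
Qed.

Variable d : nat.
Hypotheses (d_gt0 : (0 < d)%N) (eta_prim : d.-primitive_root eta) (v_neq0 : v != 0).

Definition diag_index (s : 'I_3) (i : 'I_d) : 'I_d * 'I_d :=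
  (if val s == 0%N then i else Ordinal d_gt0, i).

Lemma diag_lines_disjoint (s : 'I_3) :
  pairwise_disjoint (Lfam d eta v s) [set diag_index s i | i : 'I_d].
Proof.
move=> _ _ /imsetP [i _ ->] /imsetP [j _ ->] neq_ij.
have neq_eta : eta ^+ i != eta ^+ j.
  rewrite (eq_prim_root_expr eta_prim) !modn_small //.
  by apply: contraNneq neq_ij => /val_inj ->.
have := Lsk_diag_disjoint s i j v_neq0 neq_eta.
by rewrite /Lfam /diag_index /diag_k /=; case: (val s == 0%N).
Qed.

Lemma frak_s_Lfam (s : 'I_3) : frak_s (Lfam d eta v s) = d.
Proof.
apply/eqP; rewrite eqn_leq; apply/andP; split.
  rewrite -[X in (_ <= X)%N](card_ord d); apply: (frak_s_le_card snd).
  by move=> [k i] [k' i'] /= <- _; apply: Lsk_meet.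
have diag_inj : injective (diag_index s) by move=> i j [].
rewrite -{1}(card_ord d) -(card_imset _ diag_inj).
apply: pairwise_disjoint_le_frak_s.
exact: diag_lines_disjoint.
Qed.

End FermatLines.

Theorem corollary2p1 (d : nat) (eta v : algC) :
  (3 <= d)%N -> d.-primitive_root eta -> v ^+ d = -1 ->
  (forall s : 'I_3, frak_s (Lfam d eta v s) = d :> nat) /\
  (frak_s (Lall d eta v) <= 3 * d)%N.
Proof.
move=> d_ge3 eta_prim vd.
have d_gt0 : (0 < d)%N by apply: leq_trans d_ge3.
have v_neq0 : v != 0.
  apply: contra_eq_neq vd => ->; rewrite expr0n gtn_eqF //.
  by rewrite eq_sym oppr_eq0 oner_eq0.
split=> [s|]; first exact: frak_s_Lfam.
have -> : (3 * d = #|{: 'I_3 * 'I_d}|)%N by rewrite card_prod !card_ord.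
apply: (frak_s_le_card (fun p => (p.1, p.2.2))).
by move=> [s [k i]] [s' [k' i']] /= [<- <-] _; apply: Lsk_meet.
Qed.
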